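(* Let $m \in \mathbb{N}$ and $k \geq 4$ be integers. If $|q - q_k| < q_k^{-(m+1)k-3}$, then there is a sequence $(c_j)_{j\ge1} \in \{0,1\}^\mathbb{N}$ such that $\sum_{j\ge1} c_j q^{-j} = 1$ and $(c_j)_{j\ge1} = (1^{k-1}0)^m (c_j)_{j \ge mk+1}$, i.e. its first $mk$ digits are $m$ consecutive copies of the word $1^{k-1}0$.
   Context: $q_k$ is the unique root in $(1,2)$ of $x^k - x^{k-1} - \cdots - x - 1 = 0$. $1^{k-1}0$ denotes the word of $k-1$ ones followed by a zero, and $(w)^m$ denotes $m$ concatenated copies of $w$. *)

From Stdlib Require Import Reals Lra Lia List.
From Coquelicot Require Import Coquelicot.
Open Scope R_scope.

(* x is a root in (1,2) of x^k - x^(k-1) - ... - x - 1 = 0.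
   (This root is unique; q_k denotes it.) *)
Definition is_qk (k : nat) (x : R) : Prop :=
  1 < x < 2 /\ x ^ k - sum_f_R0 (fun i => x ^ i) (k - 1) = 0.

Definition word_1k0 (k : nat) : list bool := repeat true (k - 1) ++ false :: nil.

Definition word_pow (w : list bool) (m : nat) : list bool := concat (repeat w m).

Definition b2R (b : bool) : R := if b then 1 else 0.

(* sum_{j>=1} c_j q^{-j} = v, with digits c_j indexed from j = 1 *)
Definition expansion_value (q : R) (c : nat -> bool) (v : R) : Prop :=
  is_series (fun n : nat => b2R (c (S n)) / q ^ (S n)) v.

From Stdlib Require Import Reals Lra Lia List.
From Coquelicot Require Import Coquelicot.
Open Scope R_scope.

(* Write the first mk digits as (1^{k-1}0)^m and continue greedily.  Reading the
   block 1^{k-1}0 maps the remainder x to q^k x - (q^k - q)/(q - 1); this map fixes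
   1 exactly when q^k (2 - q) = 1, i.e. when q = q_k.  Hence after m blocks the
   remainder is 1 + d/(q - 1) * (q^{mk} - 1)/(q^k - 1) with d = 1 - q^k (2 - q),
   where d has the sign of q - q_k and |d| <= max(q, q_k)^k |q - q_k|.  The
   closeness hypothesis keeps this remainder in [0, 1/(q - 1)], an interval the
   greedy algorithm never leaves when q <= 2, and a bounded remainder x_n forces
   sum_{j<=n} c_j q^-j = 1 - x_n q^-n to converge to 1. *)

Lemma pow_sub_le (x y : R) (n : nat) : 0 <= y <= x -> 1 <= x ->
  x ^ n - y ^ n <= INR n * x ^ n * (x - y).
Proof.
  intros Hy Hx. induction n as [|n IH]; [simpl; lra|].
  rewrite S_INR. simpl.
  assert (Hyx : y ^ n <= x ^ n) by (apply pow_incr; lra).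
  assert (Hy0 : 0 <= y ^ n) by (apply pow_le; lra).
  assert (Hxn : x ^ n <= x * x ^ n) by nra.
  assert (x * (x ^ n - y ^ n) <= x * (INR n * x ^ n * (x - y)))
    by (apply Rmult_le_compat_l; lra).
  assert (y ^ n * (x - y) <= x * x ^ n * (x - y)) by (apply Rmult_le_compat_r; lra).
  nra.
Qed.

Lemma INR_le_pow (x : R) (n : nat) : 3/2 <= x -> INR n <= x ^ n.
Proof.
  intros Hx.
  assert (Hshift : forall p, INR (p + 2) <= x ^ (p + 2)).
  { induction p as [|p IH]; [simpl; nra|].
    replace (S p + 2)%nat with (S (p + 2)) by lia.
    rewrite S_INR. simpl. rewrite plus_INR in *. simpl in *.
    assert (0 <= INR p) by apply pos_INR. nra. }
  destruct n as [|[|n]]; [simpl; lra | simpl; lra |].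
  replace (S (S n)) with (n + 2)%nat by lia. apply Hshift.
Qed.

Lemma pow_close_le (a q c : R) (n : nat) : 3/2 <= a <= q ->
  a ^ n * (q - a) <= c -> q ^ n * (1 - c) <= a ^ n.
Proof.
  intros Haq Hc.
  assert (Hsub := pow_sub_le q a n ltac:(lra) ltac:(lra)).
  assert (Hn := INR_le_pow a n ltac:(lra)).
  assert (Hqn : 0 <= q ^ n) by (apply pow_le; lra).
  assert (INR n * (q - a) <= a ^ n * (q - a)) by (apply Rmult_le_compat_r; lra).
  assert (q ^ n * (INR n * (q - a)) <= q ^ n * c) by (apply Rmult_le_compat_l; lra).
  nra.
Qed.

Lemma is_qk_eqn (k : nat) (a : R) : (1 <= k)%nat -> is_qk k a -> a ^ k * (2 - a) = 1.
Proof.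
  intros Hk [Ha Hsum].
  rewrite tech3 in Hsum by lra.
  replace (S (k - 1)) with k in Hsum by lia.
  assert (Hgeom : a ^ k * (1 - a) = 1 - a ^ k).
  { apply Rminus_diag_uniq in Hsum. rewrite Hsum at 1. field. lra. }
  lra.
Qed.

Lemma is_qk_ge (k : nat) (a : R) : (4 <= k)%nat -> is_qk k a -> 18/10 <= a.
Proof.
  intros Hk Hqk.
  assert (Hfix := is_qk_eqn k a ltac:(lia) Hqk).
  destruct Hqk as [Ha _].
  destruct (Rle_or_lt (18/10) a) as [|Hlt]; [assumption | exfalso].
  assert (a ^ 4 * (2 - a) <= a ^ k * (2 - a)).
  { apply Rmult_le_compat_r; [lra|]. apply Rle_pow; [lra | lia]. }
  assert (Hfactor : a ^ 4 * (2 - a) - 1 = (a - 1) * (1 + a + a ^ 2 + a ^ 3 - a ^ 4)) by ring.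
  assert (0 < 1 + a + a ^ 2 + a ^ 3 - a ^ 4).
  { assert (a ^ 3 <= (18/10) ^ 3) by (apply pow_incr; lra).
    assert (a ^ 3 * (a - 1) <= (18/10) ^ 3 * (a - 1)) by (apply Rmult_le_compat_r; lra).
    simpl in *. nra. }
  nra.
Qed.

Section QkDefect.

Variables (k : nat) (a q : R).
Hypothesis Hfix : a ^ k * (2 - a) = 1.

Let two_sub_pos : 3/2 <= a -> 0 < 2 - a.
Proof.
  intros Ha. assert (0 < a ^ k) by (apply pow_lt; lra).
  destruct (Rlt_or_le 0 (2 - a)) as [|Hle]; [assumption|].
  assert (a ^ k * (2 - a) <= 0) by (apply Rmult_le_0_l; lra). lra.
Qed.

Let defect_split : 1 - q ^ k * (2 - q) = (2 - a) * (a ^ k - q ^ k) + q ^ k * (q - a).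
Proof. rewrite <- Hfix. ring. Qed.

Lemma qk_defect_above : 3/2 <= a <= q -> 0 <= 1 - q ^ k * (2 - q) <= q ^ k * (q - a).
Proof.
  intros Haq. rewrite defect_split.
  assert (Hpos := two_sub_pos ltac:(lra)).
  assert (Hmono : a ^ k <= q ^ k) by (apply pow_incr; lra).
  assert (Hsub := pow_sub_le q a k ltac:(lra) ltac:(lra)).
  assert (Hk := INR_le_pow a k ltac:(lra)).
  assert (Hkq : (2 - a) * INR k <= 1) by (rewrite <- Hfix; nra).
  assert (Hqa : 0 <= q ^ k * (q - a)) by (apply Rmult_le_pos; [apply pow_le|]; lra).
  nra.
Qed.

Lemma qk_defect_below : 3/2 <= q <= a -> - (q ^ k * (a - q)) <= 1 - q ^ k * (2 - q) <= 0.
Proof.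
  intros Hqa. rewrite defect_split.
  assert (Hpos := two_sub_pos ltac:(lra)).
  assert (Hmono : q ^ k <= a ^ k) by (apply pow_incr; lra).
  assert (Hsub := pow_sub_le a q k ltac:(lra) ltac:(lra)).
  assert (Hk := INR_le_pow q k ltac:(lra)).
  assert (Hka : (2 - a) * (INR k * a ^ k * (a - q)) = INR k * (a - q)).
  { transitivity (INR k * (a - q) * (a ^ k * (2 - a))); [ring | rewrite Hfix; ring]. }
  assert ((2 - a) * (a ^ k - q ^ k) <= (2 - a) * (INR k * a ^ k * (a - q)))
    by (apply Rmult_le_compat_l; lra).
  assert (INR k * (a - q) <= q ^ k * (a - q)) by (apply Rmult_le_compat_r; lra).
  split; nra.
Qed.

End QkDefect.

Section NearQk.

Variables (k N : nat) (a q : R).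
Hypotheses (Hk : (4 <= k)%nat) (Ha : 18/10 <= a) (Hfix : a ^ k * (2 - a) = 1).
Hypothesis Hclose : Rabs (q - a) < / a ^ (N + k + 3).

Let defect := 1 - q ^ k * (2 - q).
Let growth := (q ^ N - 1) / (q ^ k - 1).

Lemma near_qk_gap : a ^ (N + k) * Rabs (q - a) <= 18/100.
Proof.
  assert (Ha3 : 5832/1000 <= a ^ 3) by (simpl; nra).
  assert (HaNk : 0 < a ^ (N + k)) by (apply pow_lt; lra).
  assert (Hprod : / a ^ (N + k + 3) * a ^ (N + k) = / a ^ 3)
    by (rewrite pow_add; field; split; try apply pow_nonzero; lra).
  assert (a ^ (N + k) * Rabs (q - a) <= a ^ (N + k) * / a ^ (N + k + 3))
    by (apply Rmult_le_compat_l; lra).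
  assert (/ a ^ 3 <= / (5832/1000)) by (apply Rinv_le_contravar; lra).
  lra.
Qed.

Lemma near_qk_range : 17/10 <= q < 2.
Proof.
  assert (Hgap := near_qk_gap).
  assert (Ha4 : a ^ 4 <= a ^ (N + k)) by (apply Rle_pow; [lra | lia]).
  assert (10 <= a ^ 4).
  { replace (a ^ 4) with ((a * a) * (a * a)) by ring.
    assert (324/100 <= a * a) by nra. nra. }
  assert (Habs : 0 <= Rabs (q - a)) by apply Rabs_pos.
  assert (10 * Rabs (q - a) <= a ^ (N + k) * Rabs (q - a))
    by (apply Rmult_le_compat_r; lra).
  assert (Hak : 0 < a ^ k) by (apply pow_lt; lra).
  assert (/ a ^ (N + k + 3) <= / a ^ k).
  { apply Rinv_le_contravar; [lra|]. apply Rle_pow; [lra | lia]. }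
  assert (/ a ^ k = 2 - a) by (rewrite <- (Rmult_1_l (/ a ^ k)), <- Hfix; field; lra).
  assert (a - q <= Rabs (q - a)) by (rewrite Rabs_minus_sym; apply Rle_abs).
  apply Rabs_def2 in Hclose. split; lra.
Qed.

Let growth_mul : growth * (q ^ k - 1) = q ^ N - 1.
Proof.
  assert (Hq := near_qk_range).
  assert (q ^ 1 < q ^ k) by (apply Rlt_pow; [lra | lia]).
  unfold growth. field. simpl in *. lra.
Qed.

Let pow_k_large : 7 <= q ^ k - 1.
Proof.
  assert (Hq := near_qk_range).
  assert (q ^ 4 <= q ^ k) by (apply Rle_pow; [lra | lia]).
  replace (q ^ 4) with ((q * q) * (q * q)) in * by ring.
  assert (289/100 <= q * q) by nra. nra.
Qed.

Let pow_N_ge1 : 1 <= q ^ N.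
Proof.
  assert (Hq := near_qk_range).
  rewrite <- (pow1 N). apply pow_incr. lra.
Qed.

Lemma near_qk_above : a <= q -> 0 <= defect * growth <= 2 - q.
Proof.
  intros Haq.
  assert (Hq := near_qk_range). assert (Hgap := near_qk_gap).
  rewrite Rabs_pos_eq in Hgap by lra.
  destruct (qk_defect_above k a q Hfix ltac:(lra)) as [Hd0 Hd1]. fold defect in Hd0, Hd1.
  assert (Hg0 : 0 <= growth).
  { unfold growth. apply Rdiv_le_0_compat; lra. }
  split; [apply Rmult_le_pos; assumption|].
  assert (Hclose_pow := pow_close_le a q (18/100) (N + k) ltac:(lra) Hgap).
  rewrite (pow_add q), (pow_add a) in Hclose_pow. rewrite pow_add in Hgap.
  assert (Hdg : defect * (q ^ N - 1) <= q ^ k * (q - a) * q ^ N) by nra.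
  assert (Hmono : (2 - q) * (a ^ k - 1) <= (2 - q) * (q ^ k - 1)).
  { apply Rmult_le_compat_l; [lra|]. assert (a ^ k <= q ^ k) by (apply pow_incr; lra). lra. }
  assert (HaN : a ^ k <= a ^ N * a ^ k).
  { assert (1 <= a ^ N) by (rewrite <- (pow1 N); apply pow_incr; lra).
    assert (0 <= a ^ k) by (apply pow_le; lra). nra. }
  assert (Hgap_k : (q - a) * a ^ k <= (q - a) * (a ^ N * a ^ k))
    by (apply Rmult_le_compat_l; lra).
  assert (Hslack : 6/10 <= (2 - q) * (q ^ k - 1)).
  { assert ((2 - q) * (a ^ k - 1) = a ^ k * (2 - a) - (2 - a) - (q - a) * (a ^ k - 1)) by ring.
    nra. }
  assert (q ^ N * q ^ k * (1 - 18/100) * (q - a) <= a ^ N * a ^ k * (q - a))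
    by (apply Rmult_le_compat_r; lra).
  apply (Rmult_le_reg_r (q ^ k - 1)); [lra|].
  rewrite Rmult_assoc, growth_mul. nra.
Qed.

Lemma near_qk_below : q <= a -> - (q - 1) <= defect * growth <= 0.
Proof.
  intros Hqa.
  assert (Hq := near_qk_range). assert (Hgap := near_qk_gap).
  rewrite Rabs_minus_sym, Rabs_pos_eq in Hgap by lra.
  destruct (qk_defect_below k a q Hfix ltac:(lra)) as [Hd0 Hd1]. fold defect in Hd0, Hd1.
  assert (Hg0 : 0 <= growth).
  { unfold growth. apply Rdiv_le_0_compat; lra. }
  split; [|apply Rmult_le_0_r; assumption].
  assert (HqN : q ^ N <= a ^ N) by (apply pow_incr; lra).
  assert (HqK : q ^ k <= a ^ k) by (apply pow_incr; lra).
  rewrite pow_add in Hgap.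
  assert (Hqk0 : 0 <= q ^ k) by (apply pow_le; lra).
  assert (Hdg : - (defect * (q ^ N - 1)) <= a ^ N * a ^ k * (a - q)).
  { assert (q ^ k * (a - q) <= a ^ k * (a - q)) by (apply Rmult_le_compat_r; lra).
    assert (0 <= a ^ k * (a - q)) by (apply Rmult_le_pos; [apply pow_le|]; lra).
    nra. }
  apply (Rmult_le_reg_r (q ^ k - 1)); [lra|].
  rewrite Rmult_assoc, growth_mul. nra.
Qed.

Lemma near_qk_bounds : 1 < q <= 2 /\ 0 <= 1 + defect / (q - 1) * growth <= 1 / (q - 1).
Proof.
  assert (Hq := near_qk_range).
  assert (Hdg : - (q - 1) <= defect * growth <= 2 - q).
  { destruct (Rle_or_lt a q) as [Haq|Hqa].
    - assert (H := near_qk_above Haq). lra.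
    - assert (H := near_qk_below ltac:(lra)). lra. }
  split; [lra|].
  replace (1 + defect / (q - 1) * growth) with (((q - 1) + defect * growth) / (q - 1))
    by (field; lra).
  split.
  - apply Rdiv_le_0_compat; lra.
  - unfold Rdiv. apply Rmult_le_compat_r; [left; apply Rinv_0_lt_compat|]; lra.
Qed.

End NearQk.

Definition rem_step (q x : R) (c : bool) : R := q * x - b2R c.

Definition word_rem (q : R) (w : list bool) (x : R) : R := fold_left (rem_step q) w x.

Definition greedy_digit (q x : R) : bool := if Rle_dec 1 (q * x) then true else false.

(* The default of [nth] makes the digits follow w while it lasts and then the
   greedy rule.  The remainder after n digits is q^n (1 - sum_{j<=n} c_j q^-j). *)
Fixpoint prefix_greedy_rem (q : R) (w : list bool) (n : nat) : R :=
  match n with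
  | O => 1
  | S n => let x := prefix_greedy_rem q w n in rem_step q x (nth n w (greedy_digit q x))
  end.

Definition prefix_greedy_digit (q : R) (w : list bool) (n : nat) : bool :=
  nth n w (greedy_digit q (prefix_greedy_rem q w n)).

Lemma word_rem_app (q x : R) (u v : list bool) :
  word_rem q (u ++ v) x = word_rem q v (word_rem q u x).
Proof. apply fold_left_app. Qed.

Lemma word_rem_repeat_true (q x : R) (n : nat) : q <> 1 ->
  word_rem q (repeat true n) x = q ^ n * x - (q ^ n - 1) / (q - 1).
Proof.
  intros Hq. revert x. induction n as [|n IH]; intros x.
  - simpl. field. lra.
  - unfold word_rem in *. simpl. rewrite IH. unfold rem_step. simpl. field. lra.
Qed.

Lemma word_rem_1k0 (q y : R) (k : nat) : (1 <= k)%nat -> q <> 1 ->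
  word_rem q (word_1k0 k) (1 + y) = 1 + q ^ k * y + (1 - q ^ k * (2 - q)) / (q - 1).
Proof.
  intros Hk Hq. unfold word_1k0. rewrite word_rem_app, word_rem_repeat_true by assumption.
  assert (Hpow : q ^ k = q * q ^ (k - 1)) by (rewrite tech_pow_Rmult; f_equal; lia).
  rewrite Hpow. unfold word_rem, rem_step. simpl. field. lra.
Qed.

Lemma word_rem_pow_1k0 (q y : R) (k m : nat) : (1 <= k)%nat -> q <> 1 -> q ^ k <> 1 ->
  word_rem q (word_pow (word_1k0 k) m) (1 + y)
  = 1 + q ^ (m * k) * y + (1 - q ^ k * (2 - q)) / (q - 1) * ((q ^ (m * k) - 1) / (q ^ k - 1)).
Proof.
  intros Hk Hq HqK. revert y. induction m as [|m IH]; intros y.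
  - simpl. field. lra.
  - change (word_pow (word_1k0 k) (S m)) with (word_1k0 k ++ word_pow (word_1k0 k) m).
    rewrite word_rem_app, word_rem_1k0, Rplus_assoc, IH by assumption.
    replace (S m * k)%nat with (k + m * k)%nat by lia. rewrite pow_add.
    field. lra.
Qed.

Lemma length_word_pow (w : list bool) (m : nat) : length (word_pow w m) = (m * length w)%nat.
Proof.
  induction m as [|m IH]; [reflexivity|].
  unfold word_pow in *. simpl. rewrite length_app, IH. lia.
Qed.

Lemma length_word_1k0 (k : nat) : (1 <= k)%nat -> length (word_1k0 k) = k.
Proof. intros Hk. unfold word_1k0. rewrite length_app, repeat_length. simpl. lia. Qed.

Lemma firstn_S_nth {A : Type} (l : list A) (n : nat) (d : A) : (n < length l)%nat ->
  firstn (S n) l = firstn n l ++ nth n l d :: nil.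
Proof.
  revert n. induction l as [|x l IH]; intros n Hn; [simpl in Hn; lia|].
  destruct n as [|n]; [reflexivity|].
  simpl in Hn. rewrite !firstn_cons, (IH n) by lia. reflexivity.
Qed.

Lemma prefix_greedy_rem_word (q : R) (w : list bool) (n : nat) : (n <= length w)%nat ->
  prefix_greedy_rem q w n = word_rem q (firstn n w) 1.
Proof.
  induction n as [|n IH]; intros Hn; [reflexivity|].
  rewrite (firstn_S_nth w n (greedy_digit q (prefix_greedy_rem q w n))) by lia.
  rewrite word_rem_app, <- IH by lia. reflexivity.
Qed.

Lemma prefix_greedy_digit_prefix (q : R) (w : list bool) (j : nat) : (j < length w)%nat ->
  prefix_greedy_digit q w j = nth j w false.
Proof. intros Hj. apply nth_indep. exact Hj. Qed.

Lemma greedy_step_bounded (q x : R) : 1 < q <= 2 -> 0 <= x <= 1 / (q - 1) ->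
  0 <= rem_step q x (greedy_digit q x) <= 1 / (q - 1).
Proof.
  intros Hq Hx. unfold rem_step, greedy_digit.
  set (u := 1 / (q - 1)) in *.
  assert (Hu : u * (q - 1) = 1) by (unfold u; field; lra).
  assert (Hu1 : 1 <= u) by nra.
  assert (q * x <= q * u) by (apply Rmult_le_compat_l; lra).
  assert (0 <= q * x) by (apply Rmult_le_pos; lra).
  destruct (Rle_dec 1 (q * x)); simpl; nra.
Qed.

Lemma prefix_greedy_rem_bounded (q : R) (w : list bool) : 1 < q <= 2 ->
  0 <= word_rem q w 1 <= 1 / (q - 1) ->
  forall n, (length w <= n)%nat -> 0 <= prefix_greedy_rem q w n <= 1 / (q - 1).
Proof.
  intros Hq Hw n Hn. induction Hn as [|n Hn IH].
  - rewrite prefix_greedy_rem_word, firstn_all by lia. exact Hw.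
  - simpl. rewrite nth_overflow by lia. apply greedy_step_bounded; assumption.
Qed.

Section DigitsAndRemainders.

Variables (q : R) (c : nat -> bool) (r : nat -> R).
Hypothesis Hstep : forall n, r (S n) = q * r n - b2R (c n).

Lemma sum_digits_rem : q <> 0 ->
  forall n, sum_f_R0 (fun n => b2R (c n) / q ^ S n) n = r 0 - r (S n) / q ^ S n.
Proof.
  intros Hq n.
  induction n as [|n IH]; [simpl; rewrite Hstep; field; lra|].
  change (sum_f_R0 ?f (S n)) with (sum_f_R0 f n + f (S n)).
  rewrite IH, (Hstep (S n)).
  assert (q ^ S n <> 0) by (apply pow_nonzero; assumption).
  change (q ^ S (S n)) with (q * q ^ S n). field. split; assumption.
Qed.

Lemma is_lim_seq_div_pow (C : R) (N : nat) : 1 < q ->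
  (forall n, (N <= n)%nat -> Rabs (r n) <= C) -> is_lim_seq (fun n => r n / q ^ n) 0.
Proof.
  intros Hq Hbound.
  apply is_lim_seq_abs_0, (is_lim_seq_incr_n _ N).
  apply is_lim_seq_le_le with (u := fun _ => 0) (w := fun n => C * (/ q) ^ (n + N)).
  - intros n. split; [apply Rabs_pos|].
    assert (Hpow : 0 < q ^ (n + N)) by (apply pow_lt; lra).
    rewrite <- Rinv_pow by lra. unfold Rdiv.
    rewrite Rabs_mult, (Rabs_pos_eq (/ _)) by (left; apply Rinv_0_lt_compat; lra).
    apply Rmult_le_compat_r; [left; apply Rinv_0_lt_compat; lra|]. apply Hbound. lia.
  - apply is_lim_seq_const.
  - apply (is_lim_seq_incr_n (fun n => C * (/ q) ^ n) N).
    replace (Finite 0) with (Rbar_mult C 0) by (simpl; f_equal; ring).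
    apply is_lim_seq_scal_l, is_lim_seq_geom.
    rewrite Rabs_pos_eq by (left; apply Rinv_0_lt_compat; lra).
    rewrite <- Rinv_1. apply Rinv_1_lt_contravar; lra.
Qed.

Lemma is_series_digits_rem (C : R) (N : nat) : 1 < q ->
  (forall n, (N <= n)%nat -> Rabs (r n) <= C) ->
  is_series (fun n => b2R (c n) / q ^ S n) (r 0).
Proof.
  intros Hq Hbound.
  assert (Hlim : is_lim_seq (sum_n (fun n => b2R (c n) / q ^ S n)) (r 0)).
  { apply (is_lim_seq_ext (fun n => r 0 - r (S n) / q ^ S n)).
    { intros n. rewrite sum_n_Reals. symmetry. apply sum_digits_rem. lra. }
    replace (Finite (r 0)) with (Finite (r 0 - 0)) by (f_equal; ring).
    apply is_lim_seq_minus'; [apply is_lim_seq_const|].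
    apply (is_lim_seq_incr_1 (fun n => r n / q ^ n)).
    apply (is_lim_seq_div_pow C N Hq Hbound). }
  exact Hlim.
Qed.

End DigitsAndRemainders.

Lemma prefix_greedy_expansion (q : R) (w : list bool) : 1 < q <= 2 ->
  0 <= word_rem q w 1 <= 1 / (q - 1) ->
  expansion_value q (fun j => prefix_greedy_digit q w (pred j)) 1.
Proof.
  intros Hq Hw.
  apply (is_series_digits_rem q (prefix_greedy_digit q w) (prefix_greedy_rem q w)
           (fun n => eq_refl) (1 / (q - 1)) (length w)); [lra|].
  intros n Hn. destruct (prefix_greedy_rem_bounded q w Hq Hw n Hn).
  rewrite Rabs_pos_eq; assumption.
Qed.

Theorem lemma3p4 (m k : nat) (qk q : R) :
  (4 <= k)%nat ->
  is_qk k qk ->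
  Rabs (q - qk) < / qk ^ ((m + 1) * k + 3) ->
  exists c : nat -> bool,
    expansion_value q c 1 /\
    (forall j : nat, (j < m * k)%nat ->
       c (S j) = nth j (word_pow (word_1k0 k) m) false).
Proof.
  intros Hk Hqk Hclose.
  assert (Ha := is_qk_ge k qk Hk Hqk).
  assert (Hfix := is_qk_eqn k qk ltac:(lia) Hqk).
  replace ((m + 1) * k + 3)%nat with (m * k + k + 3)%nat in Hclose by lia.
  destruct (near_qk_bounds k (m * k) qk q Hk Ha Hfix Hclose) as [Hq Hbounds].
  set (w := word_pow (word_1k0 k) m).
  assert (Hlen : length w = (m * k)%nat)
    by (unfold w; rewrite length_word_pow, length_word_1k0 by lia; lia).
  assert (Hqk1 : q ^ k <> 1).
  { assert (q ^ 1 < q ^ k) by (apply Rlt_pow; [lra | lia]). simpl in *. lra. }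
  assert (Hrem : 0 <= word_rem q w 1 <= 1 / (q - 1)).
  { replace (word_rem q w 1) with (word_rem q w (1 + 0)) by (f_equal; ring).
    unfold w. rewrite word_rem_pow_1k0; [| lia | lra | exact Hqk1].
    rewrite Rmult_0_r, Rplus_0_r. exact Hbounds. }
  exists (fun j => prefix_greedy_digit q w (pred j)).
  split.
  - exact (prefix_greedy_expansion q w Hq Hrem).
  - intros j Hj. apply prefix_greedy_digit_prefix. lia.
Qed.
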